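(* Let $i\ge 2$ be an integer and let $f^{[i]}_n$ ($n\ge 1$) be the $i$-Fibonacci words. Then for every $n\ge 1$, $$X^{[i]}\big(f^{[i]}_n\big)=f^{[i]}_{n+1}.$$
   Context: For an integer $i\ge 2$, the $i$-Fibonacci words are finite words over the alphabet $\{0,1\}$ defined by $f^{[i]}_1=0$, $f^{[i]}_2=0^{i-1}1$ (where $0^{i-1}$ denotes $i-1$ consecutive $0$'s), and $f^{[i]}_n=f^{[i]}_{n-1}f^{[i]}_{n-2}$ (concatenation) for $n\ge 3$. The substitution $X^{[i]}$ acts on words that are written as concatenations of the two blocks $0$ and $0^{i-1}1$. Such a decomposition, when it exists, is unique: each letter $1$ forms a block together with the $i-1$ zeros immediately preceding it, and every other $0$ is a block by itself. $X^{[i]}$ replaces each block independently: the block $0$ is replaced by $0^{i-1}1$, and the block $0^{i-1}1$ is replaced by $0^{i-1}10$. The result is again a concatenation of such blocks. In the statement, $X^{[i]}$ is applied to $f^{[i]}_n$ written in its block decomposition. *)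

From mathcomp Require Import all_boot.
Set Implicit Arguments. Unset Strict Implicit. Unset Printing Implicit Defensive.

(* Words over {0,1}: letter 0 is [false], letter 1 is [true]. *)
Definition word := seq bool.

(* i-Fibonacci words, indexed so that fib_word i 1 = f_1 = 0,
   fib_word i 2 = f_2 = 0^(i-1) 1, f_n = f_(n-1) f_(n-2). fib_word i 0 is an
   unused dummy value. *)
Fixpoint fib_aux (i : nat) (n : nat) : word * word :=
  (* returns (f_(n+1), f_(n+2)) *)
  match n with
  | 0 => ([:: false], rcons (nseq i.-1 false) true)
  | k.+1 => let: (a, b) := fib_aux i k in (b, b ++ a)
  end.

Definition fib_word (i n : nat) : word := (fib_aux i n.-1).1.

Definition block (i : nat) (b : bool) : word :=
  if b then rcons (nseq i.-1 false) true else [:: false].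

Definition spell (i : nat) (bs : seq bool) : word := flatten (map (block i) bs).

Definition X_block (i : nat) (b : bool) : word :=
  if b then rcons (rcons (nseq i.-1 false) true) false
  else rcons (nseq i.-1 false) true.

(* X^[i] applied to a word given by its block decomposition bs. *)
Definition X_sub (i : nat) (bs : seq bool) : word := flatten (map (X_block i) bs).
Example fib_test : fib_word 3 4 = [:: false;false;true;false;false;false;true] /\ fib_word 2 1 = [:: false].
Proof. by split. Qed.

From mathcomp Require Import all_boot.

(* Over the block alphabet (false = block 0, true = block 0^(i-1)1) the
   i-Fibonacci words are the ordinary Fibonacci words g_n, with g_1 = 0,
   g_2 = 1, and X^[i] is [spell] composed with the Fibonacci morphism
   0 |-> 1, 1 |-> 10, which maps g_n to g_(n+1).  Uniqueness of the block
   decomposition is the injectivity of [spell], witnessed by a left inverse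
   that reads each 1 together with the i-1 zeros in front of it; it holds
   for every i. *)

Fixpoint fib_blocks (n : nat) : seq bool * seq bool :=
  match n with
  | 0 => ([:: false], [:: true])
  | k.+1 => let: (a, b) := fib_blocks k in (b, b ++ a)
  end.

Definition fib_morph (b : bool) : seq bool := if b then [:: true; false] else [:: true].

Definition fib_subst (s : seq bool) : seq bool := flatten (map fib_morph s).

Lemma fib_subst_cat s t : fib_subst (s ++ t) = fib_subst s ++ fib_subst t.
Proof. by rewrite /fib_subst map_cat flatten_cat. Qed.

Lemma fib_subst_fib_blocks n :
  fib_subst (fib_blocks n).1 = (fib_blocks n).2 /\
  fib_subst (fib_blocks n).2 = (fib_blocks n).2 ++ (fib_blocks n).1.
Proof.
elim: n => [|n] //=; case: (fib_blocks n) => a b /= [IHa IHb].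
by rewrite fib_subst_cat IHb IHa.
Qed.

Section Spell.

Variable i : nat.

Lemma spell_cat s t : spell i (s ++ t) = spell i s ++ spell i t.
Proof. by rewrite /spell map_cat flatten_cat. Qed.

Lemma fib_aux_spell n :
  fib_aux i n = (spell i (fib_blocks n).1, spell i (fib_blocks n).2).
Proof.
elim: n => [|n IH] /=; first by rewrite /spell /= !cats0.
by rewrite IH; case: (fib_blocks n) => a b /=; rewrite spell_cat.
Qed.

Lemma fib_word_spell n : fib_word i n.+1 = spell i (fib_blocks n).1.
Proof. by rewrite /fib_word fib_aux_spell. Qed.

Lemma X_sub_spell bs : X_sub i bs = spell i (fib_subst bs).
Proof.
elim: bs => [|b bs IH] //.
rewrite /X_sub /= -/(X_sub i bs) IH /fib_subst /= -/(fib_subst bs) spell_cat.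
by case: b; rewrite /spell /= ?cats0 ?cats1.
Qed.

(* [k] counts the zeros read since the last 1. *)
Fixpoint unspell_from (k : nat) (w : word) : seq bool :=
  match w with
  | [::] => nseq k false
  | false :: w' => unspell_from k.+1 w'
  | true :: w' => nseq (k - i.-1) false ++ true :: unspell_from 0 w'
  end.

Lemma unspell_from_zeros k m w :
  unspell_from k (nseq m false ++ w) = unspell_from (k + m) w.
Proof. by elim: m k => [|m IH] k /=; rewrite ?addn0 // IH addSnnS. Qed.

Lemma unspell_from_spell k bs :
  unspell_from k (spell i bs) = nseq k false ++ bs.
Proof.
elim: bs k => [|b bs IH] k; first by rewrite cats0.
rewrite /spell /= -/(spell i bs); case: b => /=.
- by rewrite -cats1 -catA unspell_from_zeros /= addnK IH.
- by rewrite IH -addn1 nseqD -catA.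
Qed.

Lemma spell_inj : injective (spell i).
Proof. by apply: (can_inj (g := unspell_from 0)) => bs; rewrite unspell_from_spell. Qed.

End Spell.

Theorem proposition2p2 (i n : nat) (hi : 2 <= i) (hn : 1 <= n) :
  (exists bs : seq bool, spell i bs = fib_word i n) /\
  (forall bs : seq bool, spell i bs = fib_word i n -> X_sub i bs = fib_word i n.+1).
Proof.
case: n hn => [|m] // _; rewrite !fib_word_spell.
split; first by exists (fib_blocks m).1.
move=> bs /spell_inj ->.
rewrite X_sub_spell (proj1 (fib_subst_fib_blocks m)) /=.
by case: (fib_blocks m).
Qed.
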